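(* Let $L\ge 2$ be an integer. For $\theta_1,\dots,\theta_L\in[0,2\pi)$, let $\theta_{(1)}\le\dots\le\theta_{(L)}$ be their sorted values, and let $\angle_k=\theta_{(k+1)}-\theta_{(k)}$ for $1\le k<L$, $\angle_L=2\pi-(\theta_{(L)}-\theta_{(1)})$. Define $$D(\theta_1,\dots,\theta_L)=\sum_{i=1}^{L-1}\sum_{j=i+1}^{L}\sin^2\Big(\sum_{k=i}^{j-1}\angle_k\Big).$$ Then the maximum of $D$ over all $(\theta_1,\dots,\theta_L)\in[0,2\pi)^L$ exists and equals $L^2/4$. *)

From Stdlib Require Import Reals Lra List Arith.
From Stdlib Require Import Orders Sorting.Mergesort Sorting.Sorted.
Import ListNotations.
Open Scope R_scope.

Module RLeBool <: TotalLeBool.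
  Definition t := R.
  Definition leb (x y : R) : bool := if Rle_dec x y then true else false.
  Infix "<=?" := leb (at level 70, no associativity).
  Theorem leb_total : forall x y, leb x y = true \/ leb y x = true.
  Proof.
    intros x y; unfold leb; destruct (Rle_dec x y); destruct (Rle_dec y x);
    auto; exfalso; lra.
  Qed.
End RLeBool.

Module RSort := Sort RLeBool.

(* sum_{k=m}^{n} f k  (empty if n < m) *)
Definition sumR (m n : nat) (f : nat -> R) : R :=
  fold_right Rplus 0 (map f (seq m (S n - m))).

(* theta_(k), 1-based: the k-th smallest of the values in th *)
Definition sorted_val (th : list R) (k : nat) : R :=
  nth (k - 1) (RSort.sort th) 0.

Definition angle (th : list R) (k : nat) : R :=
  let L := length th in
  if (k <? L)%nat then sorted_val th (S k) - sorted_val th k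
  else 2 * PI - (sorted_val th L - sorted_val th 1).

Definition D (th : list R) : R :=
  let L := length th in
  sumR 1 (L - 1) (fun i =>
    sumR (S i) L (fun j =>
      (sin (sumR i (j - 1) (fun k => angle th k))) ^ 2)).

Definition in_range (x : R) : Prop := 0 <= x < 2 * PI.

(* The angle sums telescope, so D only depends on the sorted values x_1 <= ... <= x_L and
   equals the sum over pairs i < j of sin^2 (x_j - x_i).  Since
   sin^2 (y - x) = (1 - cos (2y) cos (2x) - sin (2y) sin (2x)) / 2, this pair sum is
   L^2/4 - |sum_k exp (2 i x_k)|^2 / 4.  Hence D <= L^2/4, with equality for the equally
   spaced values x_k = k pi / L, whose doubles are the L-th roots of unity. *)
From Stdlib Require Import Reals List Lra Lia Psatz Sorting.Permutation.
Import ListNotations.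
Open Scope R_scope.

Definition sum_list (l : list R) : R := fold_right Rplus 0 l.

Lemma sum_list_app l1 l2 : sum_list (l1 ++ l2) = sum_list l1 + sum_list l2.
Proof. induction l1 as [|a l1 IH]; simpl; [ring | unfold sum_list in *; simpl; rewrite IH; ring]. Qed.

Lemma sum_list_map_perm (f : R -> R) l l' :
  Permutation l l' -> sum_list (map f l) = sum_list (map f l').
Proof. intro H; induction H; unfold sum_list in *; simpl; lra. Qed.

Lemma sumR_shift m n f : sumR (S m) (S n) f = sumR m n (fun k => f (S k)).
Proof.
  unfold sumR. replace (S (S n) - S m)%nat with (S n - m)%nat by lia.
  rewrite <- seq_shift, map_map. reflexivity.
Qed.

Lemma sumR_first m n f : (m <= n)%nat -> sumR m n f = f m + sumR (S m) n f.
Proof.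
  intro H; unfold sumR. replace (S n - m)%nat with (S (n - m)) by lia.
  replace (S n - S m)%nat with (n - m)%nat by lia. reflexivity.
Qed.

Lemma sumR_empty n f : sumR (S n) n f = 0.
Proof. unfold sumR. rewrite Nat.sub_diag. reflexivity. Qed.

Lemma sumR_ext m n f g : (forall k, (m <= k <= n)%nat -> f k = g k) ->
  sumR m n f = sumR m n g.
Proof.
  intro H; unfold sumR. f_equal. apply map_ext_in. intros k Hk.
  apply in_seq in Hk. apply H. lia.
Qed.

Lemma sumR_nth (f : R -> R) l :
  sumR 1 (length l) (fun j => f (nth (j - 1) l 0)) = sum_list (map f l).
Proof.
  induction l as [|b l IH]; [reflexivity|].
  cbn [length]. rewrite sumR_first, sumR_shift by lia.
  rewrite (sumR_ext _ _ _ (fun j => f (nth (j - 1) l 0))).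
  - rewrite IH. reflexivity.
  - intros [|k] Hk; [lia|]. simpl. rewrite Nat.sub_0_r. reflexivity.
Qed.

Fixpoint sum_pairs (f : R -> R -> R) (l : list R) : R :=
  match l with
  | [] => 0
  | a :: l' => sum_list (map (f a) l') + sum_pairs f l'
  end.

(* The same sum, indexed 1-based as in the definition of [D]. *)
Definition sum_pairs_nth (f : R -> R -> R) (l : list R) : R :=
  sumR 1 (length l - 1) (fun i => sumR (S i) (length l)
    (fun j => f (nth (i - 1) l 0) (nth (j - 1) l 0))).

Lemma sum_pairs_nth_cons f a l :
  sum_pairs_nth f (a :: l) = sum_list (map (f a) l) + sum_pairs_nth f l.
Proof.
  destruct l as [|b l'].
  - unfold sum_pairs_nth, sumR, sum_list. simpl. ring.
  - set (l := b :: l'). unfold sum_pairs_nth. cbn [length].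
    replace (S (length l) - 1)%nat with (length l) by lia.
    assert (Hn : length l = S (length l')) by reflexivity.
    rewrite sumR_first by lia. f_equal.
    + cbn [nth Nat.sub]. rewrite sumR_shift, <- sumR_nth.
      apply sumR_ext. intros [|k] Hk; [lia|]. simpl. rewrite Nat.sub_0_r. reflexivity.
    + rewrite Hn, sumR_shift, <- Hn.
      replace (length l - 1)%nat with (length l') by (rewrite Hn; lia).
      apply sumR_ext. intros [|i] Hi; [lia|]. rewrite sumR_shift.
      apply sumR_ext. intros [|j] Hj; [lia|]. simpl. rewrite !Nat.sub_0_r. reflexivity.
Qed.

Lemma sum_pairs_nthE f l : sum_pairs_nth f l = sum_pairs f l.
Proof.
  induction l as [|a l IH]; [reflexivity|].
  rewrite sum_pairs_nth_cons, IH. reflexivity.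
Qed.

Definition sum_cos_double (l : list R) : R := sum_list (map (fun x => cos (2 * x)) l).
Definition sum_sin_double (l : list R) : R := sum_list (map (fun x => sin (2 * x)) l).

Lemma sin_sub_sqr y a :
  sin (y - a) ^ 2 = (1 - (cos (2 * y) * cos (2 * a) + sin (2 * y) * sin (2 * a))) / 2.
Proof.
  assert (H : cos (2 * y) * cos (2 * a) + sin (2 * y) * sin (2 * a) = cos (2 * (y - a))).
  { rewrite <- cos_minus. f_equal. ring. }
  rewrite H, cos_2a_sin. field.
Qed.

Lemma sum_sin_sub_sqr a l :
  sum_list (map (fun y => sin (y - a) ^ 2) l) =
  INR (length l) / 2 - (sum_cos_double l * cos (2 * a) + sum_sin_double l * sin (2 * a)) / 2.
Proof.
  induction l as [|b l IH];
    unfold sum_cos_double, sum_sin_double, sum_list in *; cbn [map fold_right length] in *.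
  - simpl. field.
  - rewrite IH, sin_sub_sqr, S_INR. field.
Qed.

Lemma sum_pairs_sin_sub_sqr l :
  sum_pairs (fun a b => sin (b - a) ^ 2) l =
  INR (length l) ^ 2 / 4 - (sum_cos_double l ^ 2 + sum_sin_double l ^ 2) / 4.
Proof.
  induction l as [|a l IH].
  - unfold sum_cos_double, sum_sin_double, sum_list. simpl. field.
  - cbn [sum_pairs length]. rewrite sum_sin_sub_sqr, IH, S_INR.
    unfold sum_cos_double, sum_sin_double, sum_list in *; cbn [map fold_right] in *.
    pose proof (sin2_cos2 (2 * a)) as H. unfold Rsqr in H. nra.
Qed.

Lemma sum_angle_telescope th d i : (1 <= i)%nat -> (i + d < length th)%nat ->
  sumR i (i + d) (angle th) = sorted_val th (i + d + 1) - sorted_val th i.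
Proof.
  revert i; induction d as [|d IH]; intros i H1 H2;
    rewrite sumR_first by lia; unfold angle at 1; cbv zeta;
    rewrite (proj2 (Nat.ltb_lt _ _)) by lia.
  - rewrite Nat.add_0_r, sumR_empty. replace (i + 1)%nat with (S i) by lia. ring.
  - replace (i + S d)%nat with (S i + d)%nat by lia. rewrite IH by lia.
    replace (S i + d + 1)%nat with (i + S d + 1)%nat by lia. ring.
Qed.

Lemma D_sum_pairs th : D th = sum_pairs (fun a b => sin (b - a) ^ 2) (RSort.sort th).
Proof.
  rewrite <- sum_pairs_nthE. unfold D, sum_pairs_nth.
  rewrite <- (Permutation_length (RSort.Permuted_sort th)). cbv zeta.
  apply sumR_ext. intros i Hi. apply sumR_ext. intros j Hj.
  assert (E : sumR i (j - 1) (angle th) = sorted_val th j - sorted_val th i).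
  { replace (j - 1)%nat with (i + (j - 1 - i))%nat by lia.
    rewrite sum_angle_telescope by lia.
    replace (i + (j - 1 - i) + 1)%nat with j by lia. reflexivity. }
  change (fun k => angle th k) with (angle th). rewrite E. reflexivity.
Qed.

Lemma D_eq th : D th = INR (length th) ^ 2 / 4 -
  (sum_cos_double (RSort.sort th) ^ 2 + sum_sin_double (RSort.sort th) ^ 2) / 4.
Proof.
  rewrite D_sum_pairs, sum_pairs_sin_sub_sqr.
  rewrite <- (Permutation_length (RSort.Permuted_sort th)). reflexivity.
Qed.

Lemma sum_cos_double_perm l l' : Permutation l l' -> sum_cos_double l = sum_cos_double l'.
Proof. apply sum_list_map_perm. Qed.

Lemma sum_sin_double_perm l l' : Permutation l l' -> sum_sin_double l = sum_sin_double l'.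
Proof. apply sum_list_map_perm. Qed.

Definition arith_prog (a : R) (N : nat) : list R := map (fun k => INR k * a) (seq 0 N).

Lemma sin_mul_sum_cos_double a N :
  2 * sin a * sum_cos_double (arith_prog a N) = sin ((2 * INR N - 1) * a) + sin a.
Proof.
  unfold sum_cos_double, arith_prog. rewrite map_map.
  induction N as [|N IH].
  - unfold sum_list; simpl. replace ((2 * 0 - 1) * a) with (- a) by ring.
    rewrite sin_neg. ring.
  - rewrite seq_S, map_app, sum_list_app. unfold sum_list at 2. cbn [map fold_right].
    rewrite Rmult_plus_distr_l, IH, S_INR. simpl Nat.add.
    replace ((2 * INR N - 1) * a) with (2 * (INR N * a) - a) by ring.
    replace ((2 * (INR N + 1) - 1) * a) with (2 * (INR N * a) + a) by ring.
    rewrite sin_minus, sin_plus. ring.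
Qed.

Lemma sin_mul_sum_sin_double a N :
  2 * sin a * sum_sin_double (arith_prog a N) = cos a - cos ((2 * INR N - 1) * a).
Proof.
  unfold sum_sin_double, arith_prog. rewrite map_map.
  induction N as [|N IH].
  - unfold sum_list; simpl. replace ((2 * 0 - 1) * a) with (- a) by ring.
    rewrite cos_neg. ring.
  - rewrite seq_S, map_app, sum_list_app. unfold sum_list at 2. cbn [map fold_right].
    rewrite Rmult_plus_distr_l, IH, S_INR. simpl Nat.add.
    replace ((2 * INR N - 1) * a) with (2 * (INR N * a) - a) by ring.
    replace ((2 * (INR N + 1) - 1) * a) with (2 * (INR N * a) + a) by ring.
    rewrite cos_minus, cos_plus. ring.
Qed.

Section Equispaced.

Variable N : nat.
Hypothesis N_ge2 : (2 <= N)%nat.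

Let step := PI / INR N.

Lemma step_N : step * INR N = PI.
Proof.
  assert (0 < INR N) by (apply lt_0_INR; lia). unfold step. field. lra.
Qed.

Lemma sin_step_gt0 : 0 < sin step.
Proof.
  assert (2 <= INR N) by (replace 2 with (INR 2) by reflexivity; apply le_INR; lia).
  pose proof PI_RGT_0. pose proof step_N.
  apply sin_gt_0; [unfold step; apply Rdiv_lt_0_compat|]; nra.
Qed.

(* [(2N - 1) step = 2 pi - step] makes both telescoped sums vanish. *)
Lemma last_angle_step : (2 * INR N - 1) * step = - step + 2 * INR 1 * PI.
Proof. rewrite <- step_N. simpl (INR 1). ring. Qed.

Lemma sum_cos_double_equispaced : sum_cos_double (arith_prog step N) = 0.
Proof.
  pose proof (sin_mul_sum_cos_double step N) as T. pose proof sin_step_gt0.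
  rewrite last_angle_step, sin_period, sin_neg in T. nra.
Qed.

Lemma sum_sin_double_equispaced : sum_sin_double (arith_prog step N) = 0.
Proof.
  pose proof (sin_mul_sum_sin_double step N) as T. pose proof sin_step_gt0.
  rewrite last_angle_step, cos_period, cos_neg in T. nra.
Qed.

Lemma equispaced_in_range : Forall in_range (arith_prog step N).
Proof.
  apply Forall_forall. intros x Hx. apply in_map_iff in Hx.
  destruct Hx as [k [<- Hk]]. apply in_seq in Hk.
  assert (INR k + 1 <= INR N) by (rewrite <- S_INR; apply le_INR; lia).
  pose proof (pos_INR k). pose proof step_N. pose proof PI_RGT_0.
  assert (0 < step) by (unfold step; apply Rdiv_lt_0_compat; [lra | apply lt_0_INR; lia]).
  unfold in_range. split; nra.
Qed.

End Equispaced.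

Theorem lemma2 (L : nat) (hL : (2 <= L)%nat) :
  (forall th : list R, length th = L -> Forall in_range th ->
     D th <= (INR L) ^ 2 / 4) /\
  (exists th : list R, length th = L /\ Forall in_range th /\
     D th = (INR L) ^ 2 / 4).
Proof.
  split.
  - intros th Hl _. rewrite D_eq, Hl.
    pose proof (pow2_ge_0 (sum_cos_double (RSort.sort th))).
    pose proof (pow2_ge_0 (sum_sin_double (RSort.sort th))). lra.
  - set (th := arith_prog (PI / INR L) L).
    exists th. split; [|split].
    + unfold th, arith_prog. rewrite length_map, length_seq. reflexivity.
    + exact (equispaced_in_range L hL).
    + pose proof (RSort.Permuted_sort th) as Hsort.
      rewrite D_eq, <- (sum_cos_double_perm _ _ Hsort), <- (sum_sin_double_perm _ _ Hsort).
      unfold th. rewrite sum_cos_double_equispaced, sum_sin_double_equispaced by exact hL.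
      unfold arith_prog. rewrite length_map, length_seq. unfold pow. lra.
Qed.
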